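(* Let $\Phi$ be a rooted triple formula all of whose clauses are tame. If the graph $F_\Phi$ is connected, then $\Phi$ is unsatisfiable.
   Context: Rooted triple formula: conjunction of clauses, each a disjunction of literals $xy|z$, with the convention that no literal has the form $xx|y$, $xy|x$ or $xy|y$. Satisfiable: there is a rooted binary tree $T$ (root has two neighbours, every other vertex three or one) and a map $\alpha$ from variables to leaves of $T$ such that each clause contains a literal $xy|z$ with $\alpha(x),\alpha(y),\alpha(z)$ pairwise distinct and $\mathrm{yca}(\alpha(x),\alpha(y))$ strictly below $\mathrm{yca}(\alpha(x),\alpha(z))$ (yca = common ancestor farthest from the root). A clause is trivial if it is satisfied by every injective map of its variables into the leaves of every rooted binary tree. A clause $x_1y_1|z_1\vee\dots\vee x_py_p|z_p$ is tame if it is trivial or $\{x_i,y_i\}=\{x_j,y_j\}$ for all $i,j$. For $\Phi$ with tame clauses, $F_\Phi$ is the graph on the variables of $\Phi$ with an edge $\{x,y\}$ iff $\Phi$ contains a clause $xy|z_1\vee\dots\vee xy|z_p$ with $p\ge1$. *)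

From mathcomp Require Import all_boot.
Set Implicit Arguments. Unset Strict Implicit. Unset Printing Implicit Defensive.

(* Vertices are addressed by
   their path from the root (false = left child, true = right child). *)
Inductive tree := Leaf | Node of tree & tree.

Fixpoint is_leaf (t : tree) (p : seq bool) : bool :=
  match t, p with
  | Leaf, [::] => true
  | Node l r, b :: p' => is_leaf (if b then r else l) p'
  | _, _ => false
  end.

(* The paper's rooted binary tree: the root has two neighbours. *)
Definition rooted_binary (t : tree) : bool :=
  if t is Node _ _ then true else false.

(* Longest common prefix = address of the youngest common ancestor. *)
Fixpoint lcp (a b : seq bool) : seq bool :=
  match a, b with
  | x :: a', y :: b' => if x == y then x :: lcp a' b' else [::]
  | _, _ => [::]
  end.

Definition yca (a b : seq bool) : seq bool := lcp a b.

Definition strictly_below (u v : seq bool) : bool := prefix v u && (v != u).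

(* Variables are natural numbers; a literal xy|z is the triple (x, y, z). *)
Definition literal := (nat * nat * nat)%type.
Definition clause := seq literal.
Definition formula := seq clause.

Definition lit_vars (l : literal) : seq nat :=
  let: (x, y, z) := l in [:: x; y; z].
Definition clause_vars (C : clause) : seq nat := flatten (map lit_vars C).
Definition formula_vars (Phi : formula) : seq nat :=
  flatten (map clause_vars Phi).

(* Convention: no literal of the form xx|y, xy|x, xy|y. *)
Definition lit_wf (l : literal) : bool :=
  let: (x, y, z) := l in [&& x != y, x != z & y != z].
Definition formula_wf (Phi : formula) : bool := all (all lit_wf) Phi.

Definition lit_sat (a : nat -> seq bool) (l : literal) : bool :=
  let: (x, y, z) := l in
  [&& a x != a y, a x != a z, a y != a z &
      strictly_below (yca (a x) (a y)) (yca (a x) (a z))].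

Definition clause_sat (a : nat -> seq bool) (C : clause) : bool :=
  has (lit_sat a) C.

Definition satisfiable (Phi : formula) : Prop :=
  exists (t : tree) (a : nat -> seq bool),
    [/\ rooted_binary t,
        (forall x, x \in formula_vars Phi -> is_leaf t (a x)) &
        all (clause_sat a) Phi].

Definition trivial_clause (C : clause) : Prop :=
  forall (t : tree) (a : nat -> seq bool),
    rooted_binary t ->
    (forall x, x \in clause_vars C -> is_leaf t (a x)) ->
    {in clause_vars C &, injective a} ->
    clause_sat a C.

Definition lit_pair_is (u v : nat) (l : literal) : bool :=
  let: (x, y, _) := l in ((x == u) && (y == v)) || ((x == v) && (y == u)).

Definition same_pairs (C : clause) : Prop :=
  forall l1 l2, l1 \in C -> l2 \in C ->
    let: (x, y, _) := l1 in lit_pair_is x y l2.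

Definition tame (C : clause) : Prop := trivial_clause C \/ same_pairs C.

Definition F_edge (Phi : formula) (x y : nat) : bool :=
  (x != y) &&
  has (fun C => (C != [::]) && all (lit_pair_is x y) C) Phi.

(* Connectedness of F_Phi on the vertex set formula_vars Phi
   (a connected graph is nonempty). *)
Definition F_connected (Phi : formula) : Prop :=
  formula_vars Phi != [::] /\
  forall u v, u \in formula_vars Phi -> v \in formula_vars Phi ->
    exists p : seq nat, path (F_edge Phi) u p /\ last u p = v.

From mathcomp Require Import all_boot.
Set Implicit Arguments. Unset Strict Implicit. Unset Printing Implicit Defensive.

(* Suppose a leaf assignment a satisfies Phi and let c be the
   youngest common ancestor of all leaves a w, w a variable of Phi (the
   longest common prefix of their addresses).  An edge {x,y} of F_Phi comes
   from a clause all of whose literals read xy|z; a satisfied literal xy|z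
   has yca(a x, a y) strictly below yca(a x, a z), and the latter lies at or
   below c, so a x and a y lie in the same child subtree c.b of c.  Along
   paths of F_Phi this child is the same, so by connectedness every leaf lies
   below c.b, contradicting the maximality of c. *)

Lemma lcp_prefixl (s t : seq bool) : prefix (lcp s t) s.
Proof.
elim: s t => [|x s IH] [|y t] //=; case: eqP => // _ /=; rewrite eqxx; exact: IH.
Qed.

Lemma lcp_prefixr (s t : seq bool) : prefix (lcp s t) t.
Proof.
elim: s t => [|x s IH] [|y t] //=; case: eqP => //= ->; rewrite eqxx; exact: IH.
Qed.

Lemma lcp_greatest (c s t : seq bool) :
  prefix c s -> prefix c t -> prefix c (lcp s t).
Proof.
elim: c s t => [|x c IH] [|y s] [|z t] //=; first by rewrite prefix0s.
by move=> /andP[/eqP <- Hs] /andP[/eqP <- Ht]; rewrite eqxx /= eqxx IH.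
Qed.

Lemma prefix_rcons_exists (T : eqType) (c s : seq T) :
  prefix c s -> size c < size s -> exists b, prefix (rcons c b) s.
Proof.
elim: c s => [|x c IH] [|y s] //=; first by exists y; rewrite /= eqxx prefix0s.
by move=> /andP[/eqP -> /IH H] /H [b Hb]; exists b; rewrite /= eqxx.
Qed.

Lemma prefix_rcons_uniq (T : eqType) (c s : seq T) b1 b2 :
  prefix (rcons c b1) s -> prefix (rcons c b2) s -> b1 = b2.
Proof.
elim: c s => [|x c IH] [|y s] //=; first by move=> /andP[/eqP -> _] /andP[/eqP].
by move=> /andP[_ H1] /andP[_ H2]; exact: IH H1 H2.
Qed.

Lemma strictly_below_size (u v : seq bool) :
  strictly_below u v -> prefix v u /\ size v < size u.
Proof.
move=> /andP[Hvu Hne]; split=> //; rewrite ltn_neqAle size_prefix // andbT.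
apply: contra Hne => /eqP Hsz; apply/eqP.
by move: Hvu; rewrite prefixE Hsz take_size => /eqP.
Qed.

Definition common_prefix (d : seq bool) (L : seq (seq bool)) : seq bool :=
  foldr lcp d L.

Lemma common_prefix_prefix d L s : s \in L -> prefix (common_prefix d L) s.
Proof.
elim: L => [|h L IH] //=; rewrite inE => /predU1P[-> | /IH Hs].
  exact: lcp_prefixl.
exact: prefix_trans (lcp_prefixr _ _) Hs.
Qed.

Lemma common_prefix_greatest d L e :
  {in L, forall s, prefix e s} -> prefix e d -> prefix e (common_prefix d L).
Proof.
elim: L => [|h L IH] //= HL Hd; apply: lcp_greatest; first by rewrite HL ?mem_head.
by apply: IH => // s Hs; rewrite HL // inE Hs orbT.
Qed.

Lemma lit_var_in_formula (Phi : formula) C (l : literal) w :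
  C \in Phi -> l \in C -> w \in lit_vars l -> w \in formula_vars Phi.
Proof. by move=> HC Hl Hw; apply/flatten_mapP; exists C => //; apply/flatten_mapP; exists l. Qed.

Section SameChild.

Variables (Phi : formula) (a : nat -> seq bool) (c : seq bool).
Hypothesis c_ancestor : {in formula_vars Phi, forall w, prefix c (a w)}.
Hypothesis Phi_sat : all (clause_sat a) Phi.

Lemma edge_same_child x y :
  F_edge Phi x y -> exists b, prefix (rcons c b) (a x) /\ prefix (rcons c b) (a y).
Proof.
move=> /andP[_ /hasP[C CPhi /andP[_ pairs_xy]]].
have /hasP[[[p q] z] lC sat_pqz] := allP Phi_sat C CPhi.
have c_pref w : w \in [:: p; q; z] -> prefix c (a w).
  by move=> Hw; apply: c_ancestor; apply: (lit_var_in_formula CPhi lC).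
move: sat_pqz => /and4P[_ _ _ /strictly_below_size [pq_pz size_pz_pq]].
have c_pz : prefix c (lcp (a p) (a z)).
  by apply: lcp_greatest; apply: c_pref; rewrite !inE eqxx ?orbT.
have [b Hb] := prefix_rcons_exists (prefix_trans c_pz pq_pz)
                 (leq_ltn_trans (size_prefix c_pz) size_pz_pq).
have [Hbp Hbq] := (prefix_trans Hb (lcp_prefixl _ _), prefix_trans Hb (lcp_prefixr _ _)).
by exists b; move: (allP pairs_xy _ lC) => /= /orP[] /andP[/eqP <- /eqP <-].
Qed.

Lemma path_same_child b x p :
  prefix (rcons c b) (a x) -> path (F_edge Phi) x p ->
  prefix (rcons c b) (a (last x p)).
Proof.
elim: p x => [|y p IH] x //= Hx /andP[/edge_same_child [b' [Hb'x Hb'y]] Hp].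
by apply: IH Hp; rewrite (prefix_rcons_uniq Hx Hb'x); exact: Hb'y.
Qed.

End SameChild.

(* A connected F_Phi of a well-formed Phi has an edge: some literal xy|z
   has x != y, and a path of F_Phi from x to y is not empty. *)
Lemma connected_has_edge (Phi : formula) :
  formula_wf Phi -> F_connected Phi ->
  exists x y, x \in formula_vars Phi /\ F_edge Phi x y.
Proof.
move=> wf [nonempty connected].
have [v Hv] : exists v, v \in formula_vars Phi.
  by case: (formula_vars Phi) nonempty => [|v ?] //; exists v; rewrite mem_head.
have /flatten_mapP [C CPhi /flatten_mapP [[[x y] z] lC _]] := Hv.
have Hx : x \in formula_vars Phi.
  by apply: (lit_var_in_formula CPhi lC); rewrite mem_head.
have Hy : y \in formula_vars Phi.
  by apply: (lit_var_in_formula CPhi lC); rewrite !inE eqxx orbT.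
have [[|x1 p] [/= Hp Hlast]] := connected x y Hx Hy.
  by have := allP (allP wf C CPhi) _ lC; rewrite /= Hlast eqxx.
by exists x, x1; case/andP: Hp.
Qed.

Theorem mainTheorem7 (Phi : formula) :
  formula_wf Phi ->
  (forall C, C \in Phi -> tame C) ->
  F_connected Phi ->
  ~ satisfiable Phi.
Proof.
move=> wf _ Fconn [t [a [_ _ Phi_sat]]].
have [x [y [Hx Exy]]] := connected_has_edge wf Fconn.
pose c := common_prefix (a x) (map a (formula_vars Phi)).
have c_ancestor : {in formula_vars Phi, forall w, prefix c (a w)}.
  by move=> w Hw; apply: common_prefix_prefix; apply: map_f.
have [b [Hbx _]] := edge_same_child c_ancestor Phi_sat Exy.
have cb_ancestor : {in formula_vars Phi, forall w, prefix (rcons c b) (a w)}.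
  move=> w Hw; have [p [Hp <-]] := Fconn.2 x w Hx Hw.
  exact: (path_same_child c_ancestor Phi_sat Hbx Hp).
have : prefix (rcons c b) c.
  apply: common_prefix_greatest; last exact: cb_ancestor.
  by move=> _ /mapP [w Hw ->]; apply: cb_ancestor.
by move/size_prefix; rewrite size_rcons ltnn.
Qed.
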